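(* Let $(p,q,n,m)\in\mathbb{Z}_{\geq 0}^4$ and suppose that $T_{p',q',n',m'}$ is $G_\infty$-Noetherian for all $(p',q',n',m')\in\mathbb{Z}_{\ge0}^4$ such that $(p',q',n')$ is lexicographically smaller than $(p,q,n)$. Then for every $r\in\mathbb{Z}_{\geq 0}$, each of the following subsets of $T_{p,q,n,m}$ (with the subspace topology) is $G_\infty$-Noetherian: (i) $\{x=(x_{\mathrm{sym}},x_{\mathrm{alt}},x_{\mathrm{col}},x_{\mathrm{fin}})\in T_{p,q,n,m}:\ \mathrm{rk}(x_{\mathrm{sym}})\leq r\}$; (ii) $\{x\in T_{p,q,n,m}:\ \mathrm{rk}(x_{\mathrm{alt}})\leq r\}$; (iii) $\{x\in T_{p,q,n,m}:\ \mathrm{rk}(x_{\mathrm{col}})<n\}$.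
   Context: $\mathbb{C}^\infty$ is the space of all complex sequences indexed by $\mathbb{N}$ (column vectors), $\mathbb{C}^\infty_{\mathrm{fin}}$ its subspace of finitely supported sequences; $\mathrm{Sym}_\infty$, $\mathrm{Alt}_\infty$ are the spaces of symmetric, respectively skew-symmetric, complex $\mathbb{N}\times\mathbb{N}$ matrices, viewed as linear maps $\mathbb{C}^\infty_{\mathrm{fin}}\to\mathbb{C}^\infty$. $T_{p,q,n,m}=\mathrm{Sym}_\infty^{p}\times\mathrm{Alt}_\infty^{q}\times(\mathbb{C}^\infty)^n\times\mathbb{C}^m$, and a point is written $x=(x_{\mathrm{sym}},x_{\mathrm{alt}},x_{\mathrm{col}},x_{\mathrm{fin}})$ accordingly. It carries the Zariski topology whose coordinate ring is the polynomial ring in all coordinates (each polynomial involves finitely many coordinates). $G_\infty=\bigcup_k\mathrm{GL}_k(\mathbb{C})$ (embedded via $g\mapsto\mathrm{diag}(g,\mathrm{Id})$) acts by $g\cdot M=gMg^T$ on matrices, by left multiplication on vectors in $\mathbb{C}^\infty$, and trivially on $\mathbb{C}^m$. A space with a $G$-action is $G$-Noetherian if every strictly descending chain of $G$-stable closed subsets has finite length. Rank of a tuple: for vector spaces $V,W$ and $M=(M_1,\dots,M_s)\in\mathrm{Hom}(V,W)^s$, $\mathrm{rk}(M)$ is the infimum of $\mathrm{rk}(\sum_i\lambda_iM_i)\in\mathbb{Z}_{\ge0}\cup\{\infty\}$ over all nonzero $(\lambda_1,\dots,\lambda_s)\in\mathbb{C}^s$ (so $\mathrm{rk}(M)=\infty$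 if $s=0$). For $x_{\mathrm{col}}=(v_1,\dots,v_n)\in(\mathbb{C}^\infty)^n$, $\mathrm{rk}(x_{\mathrm{col}})$ denotes the dimension of the span of $v_1,\dots,v_n$. *)

From Stdlib Require Import Reals.
Open Scope R_scope.

Definition C : Type := (R * R)%type.
Definition C0 : C := (0, 0).
Definition C1 : C := (1, 0).
Definition Cadd (a b : C) : C := (fst a + fst b, snd a + snd b).
Definition Copp (a : C) : C := (- fst a, - snd a).
Definition Cmul (a b : C) : C :=
  (fst a * fst b - snd a * snd b, fst a * snd b + snd a * fst b).

Fixpoint Csum (r : nat) (f : nat -> C) : C :=
  match r with
  | O => C0
  | S r' => Cadd (Csum r' f) (f r')
  end.

(** * Points of T_{p,q,n,m}
   A point is stored as
   - xsym k : the k-th N x N matrix of x_sym  (entry (i,j) = xsym k i j),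
   - xalt k : the k-th N x N matrix of x_alt,
   - xcol k : the k-th vector of x_col (entry i = xcol k i),
   - xfin k : the k-th coordinate of x_fin,
   and [inT p q n m] cuts out exactly T_{p,q,n,m}: the first p (resp. q)
   matrices are symmetric (resp. skew-symmetric), and all unused slots are 0. *)
Record pt : Type := Pt {
  xsym : nat -> nat -> nat -> C;
  xalt : nat -> nat -> nat -> C;
  xcol : nat -> nat -> C;
  xfin : nat -> C }.

Definition inT (p q n m : nat) (x : pt) : Prop :=
  (forall k i j, (k < p)%nat -> xsym x k i j = xsym x k j i) /\
  (forall k i j, (p <= k)%nat -> xsym x k i j = C0) /\
  (forall k i j, (k < q)%nat -> xalt x k i j = Copp (xalt x k j i)) /\
  (forall k i j, (q <= k)%nat -> xalt x k i j = C0) /\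
  (forall k i, (n <= k)%nat -> xcol x k i = C0) /\
  (forall k, (m <= k)%nat -> xfin x k = C0).

Inductive coord : Type :=
  | VSym (k i j : nat)
  | VAlt (k i j : nat)
  | VCol (k i : nat)
  | VFin (k : nat).

Inductive poly : Type :=
  | PConst (c : C)
  | PVar (v : coord)
  | PAdd (f g : poly)
  | PMul (f g : poly).

Definition eval_coord (v : coord) (x : pt) : C :=
  match v with
  | VSym k i j => xsym x k i j
  | VAlt k i j => xalt x k i j
  | VCol k i => xcol x k i
  | VFin k => xfin x k
  end.

Fixpoint eval (f : poly) (x : pt) : C :=
  match f with
  | PConst c => c
  | PVar v => eval_coord v x
  | PAdd f g => Cadd (eval f x) (eval g x)
  | PMul f g => Cmul (eval f x) (eval g x)
  end.

Definition closed_in (Y Z : pt -> Prop) : Prop :=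
  exists S : poly -> Prop,
    forall x, Z x <-> (Y x /\ forall f, S f -> eval f x = C0).

(** * The group G_infinity = union of GL_k, g = diag(A, Id) *)
Definition invertible (k : nat) (A : nat -> nat -> C) : Prop :=
  exists B : nat -> nat -> C,
    forall i j, (i < k)%nat -> (j < k)%nat ->
      Csum k (fun l => Cmul (A i l) (B l j)) = (if Nat.eqb i j then C1 else C0) /\
      Csum k (fun l => Cmul (B i l) (A l j)) = (if Nat.eqb i j then C1 else C0).

Definition actvec (k : nat) (A : nat -> nat -> C) (v : nat -> C) : nat -> C :=
  fun i => if Nat.ltb i k then Csum k (fun a => Cmul (A i a) (v a)) else v i.

(** M |-> g M g^T *)
Definition actmat (k : nat) (A : nat -> nat -> C) (M : nat -> nat -> C)
  : nat -> nat -> C :=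
  fun i j => actvec k A (fun b => actvec k A (fun a => M a b) i) j.

Definition act (k : nat) (A : nat -> nat -> C) (x : pt) : pt :=
  {| xsym := fun c => actmat k A (xsym x c);
     xalt := fun c => actmat k A (xalt x c);
     xcol := fun c => actvec k A (xcol x c);
     xfin := xfin x |}.

Definition Gstable (Z : pt -> Prop) : Prop :=
  forall k A, invertible k A -> forall x, Z x -> Z (act k A x).

Definition GNoetherian (Y : pt -> Prop) : Prop :=
  ~ exists chain : nat -> pt -> Prop,
      (forall i, closed_in Y (chain i) /\ Gstable (chain i)) /\
      (forall i, (forall x, chain (S i) x -> chain i x) /\
                 exists x, chain i x /\ ~ chain (S i) x).

Definition span_dim_le (P : nat -> Prop) (v : nat -> nat -> C) (r : nat) : Prop :=
  exists U : nat -> nat -> C,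
    forall k, P k -> exists c : nat -> C,
      forall i, v k i = Csum r (fun l => Cmul (c l) (U l i)).

(** rank of a matrix M : C^inf_fin -> C^inf = dim of its image
    = dim of the span of its columns. *)
Definition mat_rank_le (M : nat -> nat -> C) (r : nat) : Prop :=
  span_dim_le (fun _ => True) (fun j i => M i j) r.

(** rk of an s-tuple of matrices (Ms 0, ..., Ms (s-1)) is <= r:
    the infimum over nonzero lambda of rk(sum lambda_k Ms k) is <= r,
    i.e. it is attained by some nonzero lambda (ranks are in N ∪ {oo}). *)
Definition tuple_rank_le (s : nat) (Ms : nat -> nat -> nat -> C) (r : nat) : Prop :=
  exists lam : nat -> C,
    (exists k, (k < s)%nat /\ lam k <> C0) /\
    mat_rank_le (fun i j => Csum s (fun k => Cmul (lam k) (Ms k i j))) r.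

Definition col_rank_lt (n : nat) (x : pt) : Prop :=
  exists r, (r < n)%nat /\ span_dim_le (fun k => (k < n)%nat) (xcol x) r.

Definition lex_lt (a b : nat * nat * nat) : Prop :=
  match a, b with
  | (p', q', n'), (p, q, n) =>
      (p' < p)%nat \/ (p' = p /\ q' < q)%nat \/ (p' = p /\ q' = q /\ n' < n)%nat
  end.

Definition Ysym (p q n m r : nat) (x : pt) : Prop :=
  inT p q n m x /\ tuple_rank_le p (xsym x) r.
Definition Yalt (p q n m r : nat) (x : pt) : Prop :=
  inT p q n m x /\ tuple_rank_le q (xalt x) r.
Definition Ycol (p q n m : nat) (x : pt) : Prop :=
  inT p q n m x /\ col_rank_lt n x.

(* Each of the three sets is covered by finitely many images of G-Noetherian
   spaces under G-equivariant polynomial maps; such images, and finite unions of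
   G-stable G-Noetherian sets, are G-Noetherian.
   If rk(x_col) < n, every column is a combination of n - 1 vectors whose
   coefficients become extra scalar coordinates: an image of T_{p,q,n-1,m'}.
   If some combination sum_k lam_k M_k of the symmetric (resp. skew-symmetric)
   matrices with lam_{k0} <> 0 has rank <= r, it equals U V^T and M_{k0} can be
   solved from this relation; storing U, V as 2r extra columns and lam as extra
   scalars exhibits the set, for each k0, as an image of a Zariski-closed subset
   of T_{p-1,q,n+2r,m'} (resp. T_{p,q-1,n+2r,m'}).  In every case (p,q,n)
   decreases lexicographically. *)

From Stdlib Require Import Reals Lra Psatz Lia FunctionalExtensionality ClassicalEpsilon Ring.
Open Scope R_scope.

Definition Csub (a b : C) : C := Cadd a (Copp b).

Lemma C_ring_theory : ring_theory C0 C1 Cadd Cmul Csub Copp (@eq C).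
Proof.
  constructor; intros;
  repeat match goal with a : C |- _ => destruct a end;
  unfold Csub, Cadd, Cmul, Copp, C0, C1; simpl; f_equal; ring.
Qed.
Add Ring C_ring : C_ring_theory.

Definition Cinv (a : C) : C :=
  (fst a / (fst a * fst a + snd a * snd a), - snd a / (fst a * fst a + snd a * snd a)).

Lemma Cinv_l (a : C) : a <> C0 -> Cmul (Cinv a) a = C1.
Proof.
  destruct a as [x y]; intros Ha; unfold Cinv, Cmul, C1; simpl.
  assert (x * x + y * y <> 0).
  { intros E. apply Ha. unfold C0. f_equal; nra. }
  f_equal; field; auto.
Qed.

Lemma C1_neq_C0 : C1 <> C0.
Proof. unfold C1, C0; intros E; inversion E; lra. Qed.

Lemma Csub_eq0 (a b : C) : Csub a b = C0 <-> a = b.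
Proof.
  split; intros H.
  - transitivity (Cadd (Csub a b) b); [ring | rewrite H; ring].
  - subst; ring.
Qed.

Lemma Csum_ext (r : nat) (f g : nat -> C) :
  (forall l, (l < r)%nat -> f l = g l) -> Csum r f = Csum r g.
Proof.
  induction r; intros H; simpl; auto.
  rewrite IHr by (intros; apply H; lia). rewrite H by lia. reflexivity.
Qed.

Lemma Csum_add (r : nat) (f g : nat -> C) :
  Csum r (fun l => Cadd (f l) (g l)) = Cadd (Csum r f) (Csum r g).
Proof. induction r; simpl; [unfold C0, Cadd; simpl; f_equal; ring | rewrite IHr; ring]. Qed.

Lemma Csum_scal (r : nat) (c : C) (f : nat -> C) :
  Csum r (fun l => Cmul c (f l)) = Cmul c (Csum r f).
Proof. induction r; simpl; [unfold C0, Cmul; simpl; f_equal; ring | rewrite IHr; ring]. Qed.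

Lemma Csum_zero (r : nat) : Csum r (fun _ => C0) = C0.
Proof. induction r; simpl; auto. rewrite IHr; ring. Qed.

Lemma Csum_swap (r s : nat) (F : nat -> nat -> C) :
  Csum r (fun a => Csum s (fun b => F a b)) = Csum s (fun b => Csum r (fun a => F a b)).
Proof.
  induction r; simpl; [symmetry; apply Csum_zero|].
  rewrite IHr, <- Csum_add. reflexivity.
Qed.

Lemma Csum_split (r k0 : nat) (g : nat -> C) : (k0 < r)%nat ->
  Csum r g = Cadd (g k0) (Csum r (fun k => if Nat.eqb k k0 then C0 else g k)).
Proof.
  induction r; intros H; [lia|]. simpl.
  destruct (Nat.eq_dec k0 r) as [->|Hne].
  - rewrite Nat.eqb_refl, (Csum_ext r (fun k => if Nat.eqb k r then C0 else g k) g).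
    + ring.
    + intros l Hl. destruct (Nat.eqb_spec l r); [lia|auto].
  - rewrite IHr by lia. destruct (Nat.eqb_spec r k0); [lia|]. ring.
Qed.

Lemma Csum_pad (r d : nat) (g : nat -> C) :
  (forall l, (r <= l)%nat -> g l = C0) -> Csum (r + d) g = Csum r g.
Proof.
  intros H; induction d; [rewrite Nat.add_0_r; auto|].
  rewrite Nat.add_succ_r; simpl. rewrite IHd, H by lia. ring.
Qed.

Lemma actvec_ext k A (u v : nat -> C) i :
  (forall a, u a = v a) -> actvec k A u i = actvec k A v i.
Proof.
  intros H; unfold actvec; destruct (Nat.ltb i k); auto.
  apply Csum_ext; intros; rewrite H; auto.
Qed.

Lemma actvec_add k A (u v : nat -> C) i :
  actvec k A (fun a => Cadd (u a) (v a)) i = Cadd (actvec k A u i) (actvec k A v i).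
Proof.
  unfold actvec; destruct (Nat.ltb i k); auto.
  rewrite <- Csum_add. apply Csum_ext; intros; ring.
Qed.

Lemma actvec_scal k A (c : C) (u : nat -> C) i :
  actvec k A (fun a => Cmul c (u a)) i = Cmul c (actvec k A u i).
Proof.
  unfold actvec; destruct (Nat.ltb i k); auto.
  rewrite <- Csum_scal. apply Csum_ext; intros; ring.
Qed.

Lemma actvec_scal_r k A (c : C) (u : nat -> C) i :
  actvec k A (fun a => Cmul (u a) c) i = Cmul (actvec k A u i) c.
Proof.
  rewrite (actvec_ext k A _ (fun a => Cmul c (u a))) by (intros; ring).
  rewrite actvec_scal; ring.
Qed.

Lemma actvec_zero k A i : actvec k A (fun _ => C0) i = C0.
Proof.
  unfold actvec; destruct (Nat.ltb i k); auto.
  rewrite (Csum_ext _ _ (fun _ => C0)) by (intros; ring). apply Csum_zero.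
Qed.

Lemma actvec_opp k A (u : nat -> C) i :
  actvec k A (fun a => Copp (u a)) i = Copp (actvec k A u i).
Proof.
  rewrite (actvec_ext k A _ (fun a => Cmul (Copp C1) (u a))) by (intros; ring).
  rewrite actvec_scal; ring.
Qed.

Lemma actvec_Csum k A r (F : nat -> nat -> C) i :
  actvec k A (fun a => Csum r (fun l => F l a)) i = Csum r (fun l => actvec k A (F l) i).
Proof.
  induction r; simpl; [apply actvec_zero|].
  rewrite actvec_add, IHr. reflexivity.
Qed.

Lemma actmat_ext k A (M N : nat -> nat -> C) i j :
  (forall a b, M a b = N a b) -> actmat k A M i j = actmat k A N i j.
Proof.
  intros H; unfold actmat. apply actvec_ext; intros b. apply actvec_ext; intros a. auto.
Qed.

Lemma actmat_add k A (M N : nat -> nat -> C) i j :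
  actmat k A (fun a b => Cadd (M a b) (N a b)) i j = Cadd (actmat k A M i j) (actmat k A N i j).
Proof.
  unfold actmat. rewrite <- actvec_add. apply actvec_ext; intros b. apply actvec_add.
Qed.

Lemma actmat_scal k A c (M : nat -> nat -> C) i j :
  actmat k A (fun a b => Cmul c (M a b)) i j = Cmul c (actmat k A M i j).
Proof.
  unfold actmat. rewrite <- actvec_scal. apply actvec_ext; intros b. apply actvec_scal.
Qed.

Lemma actmat_opp k A (M : nat -> nat -> C) i j :
  actmat k A (fun a b => Copp (M a b)) i j = Copp (actmat k A M i j).
Proof.
  unfold actmat. rewrite <- actvec_opp. apply actvec_ext; intros b. apply actvec_opp.
Qed.

Lemma actmat_zero k A i j : actmat k A (fun _ _ => C0) i j = C0.
Proof.
  unfold actmat. rewrite (actvec_ext k A _ (fun _ => C0)); [apply actvec_zero|].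
  intros; apply actvec_zero.
Qed.

Lemma actmat_Csum k A r (F : nat -> nat -> nat -> C) i j :
  actmat k A (fun a b => Csum r (fun l => F l a b)) i j = Csum r (fun l => actmat k A (F l) i j).
Proof.
  unfold actmat. rewrite <- actvec_Csum. apply actvec_ext; intros b. apply actvec_Csum.
Qed.

Lemma actmat_transpose k A (M : nat -> nat -> C) i j :
  actmat k A M j i = actmat k A (fun a b => M b a) i j.
Proof.
  unfold actmat, actvec.
  destruct (Nat.ltb i k), (Nat.ltb j k); auto.
  transitivity (Csum k (fun a => Csum k (fun b => Cmul (A i a) (Cmul (A j b) (M b a))))).
  { apply Csum_ext; intros; rewrite <- Csum_scal; reflexivity. }
  rewrite Csum_swap. apply Csum_ext; intros b _.
  rewrite <- Csum_scal. apply Csum_ext; intros a _. ring.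
Qed.

Lemma inT_act p q n m k A x : inT p q n m x -> inT p q n m (act k A x).
Proof.
  intros (H1&H2&H3&H4&H5&H6); unfold inT, act; simpl; repeat split; intros.
  - rewrite actmat_transpose; apply actmat_ext; intros; apply H1; auto.
  - rewrite (actmat_ext _ _ _ (fun _ _ => C0)); [apply actmat_zero | intros; apply H2; auto].
  - rewrite actmat_transpose, <- actmat_opp; apply actmat_ext; intros; apply H3; auto.
  - rewrite (actmat_ext _ _ _ (fun _ _ => C0)); [apply actmat_zero | intros; apply H4; auto].
  - rewrite (actvec_ext _ _ _ (fun _ => C0)); [apply actvec_zero | intros; apply H5; auto].
  - apply H6; auto.
Qed.

Definition zero_mx : nat -> nat -> C := fun _ _ => C0.

Definition Msub (M N : nat -> nat -> C) : nat -> nat -> C := fun i j => Csub (M i j) (N i j).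

Definition outer (r : nat) (U V : nat -> nat -> C) : nat -> nat -> C :=
  fun i j => Csum r (fun l => Cmul (U l i) (V l j)).

Definition lincomb (s : nat) (lam : nat -> C) (Ms : nat -> nat -> nat -> C) : nat -> nat -> C :=
  fun i j => Csum s (fun k => Cmul (lam k) (Ms k i j)).

Lemma actmat_Msub k A M N i j :
  actmat k A (Msub M N) i j = Msub (actmat k A M) (actmat k A N) i j.
Proof. unfold Msub, Csub. rewrite actmat_add, actmat_opp. reflexivity. Qed.

Lemma actmat_outer k A r U V i j :
  actmat k A (outer r U V) i j = outer r (fun l => actvec k A (U l)) (fun l => actvec k A (V l)) i j.
Proof.
  unfold actmat, outer.
  rewrite (actvec_ext k A _ (fun b => Csum r (fun l => Cmul (actvec k A (U l) i) (V l b)))).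
  - rewrite actvec_Csum. apply Csum_ext; intros. apply actvec_scal.
  - intros b. rewrite actvec_Csum. apply Csum_ext; intros. apply actvec_scal_r.
Qed.

Lemma actmat_lincomb k A s lam Ms i j :
  actmat k A (lincomb s lam Ms) i j = lincomb s lam (fun c => actmat k A (Ms c)) i j.
Proof.
  unfold lincomb. rewrite actmat_Csum. apply Csum_ext; intros. apply actmat_scal.
Qed.

(* The flag [b] selects symmetric ([false], x_sym) or skew-symmetric ([true],
   x_alt) matrices; [msym b] is the sign relating [M i j] to [M j i]. *)
Definition msym (b : bool) (a : C) : C := if b then Copp a else a.

Definition msymmetric (b : bool) (M : nat -> nat -> C) : Prop :=
  forall i j, M i j = msym b (M j i).

Definition tuple_ok (b : bool) (s : nat) (Ms : nat -> nat -> nat -> C) : Prop :=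
  (forall k i j, (k < s)%nat -> Ms k i j = msym b (Ms k j i)) /\
  (forall k i j, (s <= k)%nat -> Ms k i j = C0).

Lemma msymmetric_Msub b M N :
  msymmetric b M -> msymmetric b N -> msymmetric b (Msub M N).
Proof. unfold msymmetric, Msub, Csub, msym; intros HM HN i j; rewrite HM, HN; destruct b; ring. Qed.

Lemma msymmetric_lincomb b s lam Ms :
  tuple_ok b s Ms -> msymmetric b (lincomb s lam Ms).
Proof.
  intros [HMs _] i j. unfold lincomb, msym.
  rewrite (Csum_ext s _ (fun k => Cmul (lam k) (msym b (Ms k j i)))) by (intros; rewrite HMs; auto).
  unfold msym; destruct b; [|reflexivity].
  rewrite (Csum_ext s _ (fun k => Cmul (Copp C1) (Cmul (lam k) (Ms k j i)))) by (intros; ring).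
  rewrite Csum_scal; ring.
Qed.

Lemma msymmetric_actmat b k A M : msymmetric b M -> msymmetric b (actmat k A M).
Proof.
  intros HM i j. rewrite (actmat_transpose k A M j i). unfold msym; destruct b.
  - rewrite <- actmat_opp. apply actmat_ext; intros a c. apply HM.
  - apply actmat_ext; intros a c. apply HM.
Qed.

Lemma span_dim_le_mono P v r r' :
  (r <= r')%nat -> span_dim_le P v r -> span_dim_le P v r'.
Proof.
  intros Hr [U HU]. exists U. intros k Hk. destruct (HU k Hk) as [c Hc].
  exists (fun l => if Nat.ltb l r then c l else C0). intros i. rewrite Hc.
  replace r' with (r + (r' - r))%nat by lia. rewrite Csum_pad.
  - apply Csum_ext; intros l Hl. destruct (Nat.ltb_spec l r); [reflexivity | lia].
  - intros l Hl. destruct (Nat.ltb_spec l r); [lia | ring].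
Qed.

Lemma mat_rank_le_outer r U V : mat_rank_le (outer r U V) r.
Proof.
  exists U. intros j _. exists (fun l => V l j). intros i. apply Csum_ext; intros; ring.
Qed.

Lemma mat_rank_le_outer_inv M r :
  mat_rank_le M r -> exists U V, forall i j, M i j = outer r U V i j.
Proof.
  intros [U HU].
  destruct (choice (fun j c => forall i, M i j = Csum r (fun l => Cmul (c l) (U l i))))
    as [c Hc].
  { intros j. exact (HU j I). }
  exists U, (fun l j => c j l). intros i j. rewrite Hc. apply Csum_ext; intros; ring.
Qed.

Lemma tuple_rank_le_outer s Ms r :
  tuple_rank_le s Ms r <->
  exists lam k0 U V, (k0 < s)%nat /\ lam k0 <> C0 /\
    forall i j, lincomb s lam Ms i j = outer r U V i j.
Proof.
  split.
  - intros [lam [[k0 [Hk0 Hl]] HM]]. destruct (mat_rank_le_outer_inv _ _ HM) as [U [V HUV]].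
    exists lam, k0, U, V. auto.
  - intros [lam [k0 [U [V [Hk0 [Hl HUV]]]]]]. exists lam. split; [eauto|].
    replace (fun i j => Csum s (fun k => Cmul (lam k) (Ms k i j))) with (outer r U V)
      by (extensionality i; extensionality j; symmetry; apply HUV).
    apply mat_rank_le_outer.
Qed.

Lemma tuple_rank_le_0 Ms r : ~ tuple_rank_le 0 Ms r.
Proof. intros [_ [[k [Hk _]] _]]. lia. Qed.

Definition polyfun (h : pt -> C) : Prop := exists g : poly, forall y, eval g y = h y.

Definition polymap (f : pt -> pt) : Prop := forall v, polyfun (fun y => eval_coord v (f y)).

Definition zclosed (Z : pt -> Prop) : Prop :=
  exists S : poly -> Prop, forall x, Z x <-> forall g, S g -> eval g x = C0.

Definition equivariant (f : pt -> pt) : Prop :=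
  forall k A y, invertible k A -> f (act k A y) = act k A (f y).

Definition image (f : pt -> pt) (Y : pt -> Prop) (x : pt) : Prop :=
  exists y, Y y /\ f y = x.

Lemma polyfun_const c : polyfun (fun _ => c).
Proof. exists (PConst c). reflexivity. Qed.

Lemma polyfun_coord v : polyfun (eval_coord v).
Proof. exists (PVar v). reflexivity. Qed.

Lemma polyfun_add h h' : polyfun h -> polyfun h' -> polyfun (fun y => Cadd (h y) (h' y)).
Proof. intros [g Hg] [g' Hg']. exists (PAdd g g'). intros y. simpl. rewrite Hg, Hg'. reflexivity. Qed.

Lemma polyfun_mul h h' : polyfun h -> polyfun h' -> polyfun (fun y => Cmul (h y) (h' y)).
Proof. intros [g Hg] [g' Hg']. exists (PMul g g'). intros y. simpl. rewrite Hg, Hg'. reflexivity. Qed.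

Lemma polyfun_opp h : polyfun h -> polyfun (fun y => Copp (h y)).
Proof.
  intros [g Hg]. exists (PMul (PConst (Copp C1)) g). intros y. simpl. rewrite Hg. ring.
Qed.

Lemma polyfun_Csum r (h : nat -> pt -> C) :
  (forall l, polyfun (h l)) -> polyfun (fun y => Csum r (fun l => h l y)).
Proof.
  intros Hh. induction r; simpl; [apply polyfun_const|]. apply polyfun_add; auto.
Qed.

Lemma polymap_id : polymap (fun y => y).
Proof. intros v. apply polyfun_coord. Qed.

Fixpoint psubst (sg : coord -> poly) (g : poly) : poly :=
  match g with
  | PConst c => PConst c
  | PVar v => sg v
  | PAdd g1 g2 => PAdd (psubst sg g1) (psubst sg g2)
  | PMul g1 g2 => PMul (psubst sg g1) (psubst sg g2)
  end.

Lemma eval_psubst sg g y z :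
  (forall v, eval (sg v) y = eval_coord v z) -> eval (psubst sg g) y = eval g z.
Proof. intros H; induction g; simpl; auto; rewrite IHg1, IHg2; auto. Qed.

Lemma zclosed_preimage Z f : polymap f -> zclosed Z -> zclosed (fun y => Z (f y)).
Proof.
  intros Hf [S HS].
  destruct (choice (fun v g => forall y, eval g y = eval_coord v (f y)) Hf) as [sg Hsg].
  exists (fun h => exists g, S g /\ h = psubst sg g). intros y. rewrite HS. split.
  - intros H h [g [Hg ->]]. rewrite (eval_psubst sg g y (f y)) by auto. auto.
  - intros H g Hg. rewrite <- (eval_psubst sg g y (f y)) by auto. apply H. eauto.
Qed.

Lemma zclosed_eq h h' : polyfun h -> polyfun h' -> zclosed (fun x => h x = h' x).
Proof.
  intros [g Hg] [g' Hg'].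
  exists (fun g0 => g0 = PAdd g (PMul (PConst (Copp C1)) g')). intros x. split.
  - intros E g0 ->. simpl. rewrite Hg, Hg', E. ring.
  - intros H. apply Csub_eq0. rewrite <- Hg, <- Hg'. unfold Csub.
    rewrite <- (H _ eq_refl). simpl. ring.
Qed.

Lemma zclosed_forall (I : Type) (Z : I -> pt -> Prop) :
  (forall i, zclosed (Z i)) -> zclosed (fun x => forall i, Z i x).
Proof.
  intros HZ. destruct (choice _ HZ) as [S HS].
  exists (fun g => exists i, S i g). intros x. split.
  - intros H g [i Hg]. apply (HS i); auto.
  - intros H i. apply HS. intros g Hg. apply H. eauto.
Qed.

Lemma zclosed_and Z1 Z2 : zclosed Z1 -> zclosed Z2 -> zclosed (fun x => Z1 x /\ Z2 x).
Proof.
  intros [S1 H1] [S2 H2]. exists (fun g => S1 g \/ S2 g). intros x. rewrite H1, H2.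
  split; [intros [Ha Hb] g [Hg|Hg]; auto | intros H; split; auto].
Qed.

Lemma closed_in_iff Y Z :
  closed_in Y Z <-> exists Zc, zclosed Zc /\ forall x, Z x <-> Y x /\ Zc x.
Proof.
  split.
  - intros [S HS]. exists (fun x => forall g, S g -> eval g x = C0).
    split; [exists S; reflexivity | exact HS].
  - intros [Zc [[S HS] HZ]]. exists S. intros x. rewrite HZ, HS. reflexivity.
Qed.

Lemma closed_in_sub Y Z x : closed_in Y Z -> Z x -> Y x.
Proof. intros [S HS] Hx. apply HS in Hx. tauto. Qed.

Lemma closed_in_preimage Y Y' Z f :
  polymap f -> (forall y, Y' y -> Y (f y)) -> closed_in Y Z ->
  closed_in Y' (fun y => Y' y /\ Z (f y)).
Proof.
  intros Hf HY HZ. apply closed_in_iff in HZ as [Zc [HZc HZ]]. apply closed_in_iff.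
  exists (fun y => Zc (f y)). split; [apply zclosed_preimage; auto|].
  intros y. rewrite HZ. split; [tauto|]. intros [Hy Hz]. auto.
Qed.

Lemma Gstable_preimage Y Z f :
  equivariant f -> Gstable Y -> Gstable Z -> Gstable (fun y => Y y /\ Z (f y)).
Proof.
  intros Hf HY HZ k A HA y [Hy Hz]. split; [auto|]. rewrite Hf by auto. auto.
Qed.

Lemma Gstable_image Y f : equivariant f -> Gstable Y -> Gstable (image f Y).
Proof.
  intros Hf HY k A HA x [y [Hy <-]]. exists (act k A y). split; auto.
Qed.

Definition Gchain (Y : pt -> Prop) (Ch : nat -> pt -> Prop) : Prop :=
  (forall i, closed_in Y (Ch i) /\ Gstable (Ch i)) /\ (forall i x, Ch (S i) x -> Ch i x).

Definition stabilizes (Ch : nat -> pt -> Prop) : Prop :=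
  exists N, forall i, (N <= i)%nat -> forall x, Ch i x -> Ch (S i) x.

Lemma chain_antitone (Ch : nat -> pt -> Prop) :
  (forall i x, Ch (S i) x -> Ch i x) -> forall i j x, (i <= j)%nat -> Ch j x -> Ch i x.
Proof. intros Hd i j x Hij. induction Hij; auto. Qed.

Lemma GNoetherian_iff Y : GNoetherian Y <-> forall Ch, Gchain Y Ch -> stabilizes Ch.
Proof.
  split.
  - intros HN Ch [Hc Hd]. apply NNPP. intros Hns.
    assert (Hdrop : forall N, exists i, (N < i)%nat /\ exists x, Ch N x /\ ~ Ch i x).
    { intros N. apply NNPP. intros H0. apply Hns. exists N. intros i Hi x Hx.
      apply NNPP. intros H1. apply H0. exists (S i). split; [lia|].
      exists x. split; [exact (chain_antitone Ch Hd N i x Hi Hx) | auto]. }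
    destruct (choice _ Hdrop) as [next Hnext].
    set (h := fix h s := match s with O => O | S s' => next (h s') end).
    apply HN. exists (fun s => Ch (h s)). split; [intros; apply Hc|].
    intros s. simpl. destruct (Hnext (h s)) as [Hlt [x [Hx1 Hx2]]]. split.
    + intros y. apply chain_antitone; auto. lia.
    + exists x. auto.
  - intros H [Ch [Hc Hd]]. destruct (H Ch) as [N HN]; [split; [auto | apply Hd]|].
    destruct (Hd N) as [_ [x [Hx Hnx]]]. apply Hnx, (HN N); auto.
Qed.

Lemma GNoetherian_ext Y Y' : (forall x, Y x <-> Y' x) -> GNoetherian Y -> GNoetherian Y'.
Proof.
  intros HY HN [Ch [Hc Hd]]. apply HN. exists Ch. split; [|auto].
  intros i. destruct (Hc i) as [[S HS] HG]. split; [|auto].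
  exists S. intros x. rewrite HS, HY. reflexivity.
Qed.

Lemma GNoetherian_empty Y : (forall x, ~ Y x) -> GNoetherian Y.
Proof.
  intros H [Ch [Hc Hd]]. destruct (Hd O) as [_ [x [Hx _]]].
  exact (H x (closed_in_sub _ _ _ (proj1 (Hc O)) Hx)).
Qed.

Lemma GNoetherian_zclosed Y Z : zclosed Z -> GNoetherian Y -> GNoetherian (fun x => Y x /\ Z x).
Proof.
  intros HZ HN [Ch [Hc Hd]]. apply HN. exists Ch. split; [|auto].
  intros i. destruct (Hc i) as [Hci HG]. split; [|auto].
  apply closed_in_iff in Hci as [Zc [HZc HCh]]. apply closed_in_iff.
  exists (fun x => Z x /\ Zc x). split; [apply zclosed_and; auto|].
  intros x. rewrite HCh. tauto.
Qed.

Lemma GNoetherian_image Y f :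
  Gstable Y -> polymap f -> equivariant f -> GNoetherian Y -> GNoetherian (image f Y).
Proof.
  rewrite !GNoetherian_iff. intros HG Hf He HN Ch [Hc Hd].
  destruct (HN (fun i y => Y y /\ Ch i (f y))) as [N HNs].
  { split.
    - intros i. destruct (Hc i) as [Hci HGi]. split.
      + apply (closed_in_preimage (image f Y)); auto. intros y Hy. exists y. auto.
      + apply Gstable_preimage; auto.
    - intros i y [Hy Hch]. auto. }
  exists N. intros i Hi x Hx.
  destruct (closed_in_sub _ _ _ (proj1 (Hc i)) Hx) as [y [Hy <-]].
  apply (HNs i Hi y). auto.
Qed.

Lemma GNoetherian_union Y1 Y2 :
  Gstable Y1 -> Gstable Y2 -> GNoetherian Y1 -> GNoetherian Y2 ->
  GNoetherian (fun x => Y1 x \/ Y2 x).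
Proof.
  rewrite !GNoetherian_iff. intros HG1 HG2 HN1 HN2 Ch [Hc Hd].
  assert (Hpart : forall Y, Gstable Y -> (forall x, Y x -> Y1 x \/ Y2 x) ->
                    Gchain Y (fun i x => Y x /\ Ch i x)).
  { intros Y HG Hsub. split.
    - intros i. destruct (Hc i) as [Hci HGi]. split.
      + exact (closed_in_preimage _ Y _ _ polymap_id Hsub Hci).
      + apply (Gstable_preimage Y (Ch i) (fun x => x)); auto. intros ? ? ? ?; reflexivity.
    - intros i x [Hx Hch]. auto. }
  destruct (HN1 _ (Hpart Y1 HG1 (fun x H => or_introl H))) as [N1 H1].
  destruct (HN2 _ (Hpart Y2 HG2 (fun x H => or_intror H))) as [N2 H2].
  exists (Nat.max N1 N2). intros i Hi x Hx.
  destruct (closed_in_sub _ _ _ (proj1 (Hc i)) Hx) as [Hy|Hy].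
  - apply (H1 i); [lia | auto].
  - apply (H2 i); [lia | auto].
Qed.

Lemma GNoetherian_bigunion N (Y : nat -> pt -> Prop) :
  (forall j, (j < N)%nat -> Gstable (Y j) /\ GNoetherian (Y j)) ->
  GNoetherian (fun x => exists j, (j < N)%nat /\ Y j x).
Proof.
  induction N as [|N IH]; intros HY.
  { apply GNoetherian_empty. intros x [j [Hj _]]. lia. }
  apply (GNoetherian_ext (fun x => (exists j, (j < N)%nat /\ Y j x) \/ Y N x)).
  { intros x. split.
    - intros [[j [Hj Hx]] | Hx]; exists j || exists N; split; auto; lia.
    - intros [j [Hj Hx]]. destruct (Nat.eq_dec j N) as [->|]; [right; auto|].
      left. exists j. split; [lia | auto]. }
  apply GNoetherian_union.
  - intros k A HA x [j [Hj Hx]]. exists j. split; [auto|]. apply (HY j); [lia | auto | auto].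
  - apply HY. lia.
  - apply IH. intros j Hj. apply HY. lia.
  - apply HY. lia.
Qed.

Lemma pt_eq (x y : pt) :
  xsym x = xsym y -> xalt x = xalt y -> xcol x = xcol y -> xfin x = xfin y -> x = y.
Proof. destruct x, y; simpl; intros; subst; auto. Qed.

Definition append {A : Type} (n : nat) (v w : nat -> A) : nat -> A :=
  fun k => if Nat.ltb k n then v k else w (k - n)%nat.

Definition shift {A : Type} (n : nat) (v : nat -> A) : nat -> A := fun l => v (n + l)%nat.

Lemma append_lt {A} n (v w : nat -> A) k : (k < n)%nat -> append n v w k = v k.
Proof. intros H. unfold append. destruct (Nat.ltb_spec k n); [reflexivity | lia]. Qed.

Lemma append_ge {A} n (v w : nat -> A) k : (n <= k)%nat -> append n v w k = w (k - n)%nat.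
Proof. intros H. unfold append. destruct (Nat.ltb_spec k n); [lia | reflexivity]. Qed.

Lemma shift_append {A} n (v w : nat -> A) : shift n (append n v w) = w.
Proof.
  extensionality l. unfold shift. rewrite append_ge by lia. f_equal. lia.
Qed.

Definition trunc (n m : nat) (y : pt) : pt :=
  Pt (xsym y) (xalt y) (append n (xcol y) (fun _ _ => C0)) (append m (xfin y) (fun _ => C0)).

Lemma polymap_trunc n m : polymap (trunc n m).
Proof.
  intros v. destruct v; cbn; try apply (polyfun_coord (VSym _ _ _));
    try apply (polyfun_coord (VAlt _ _ _)); unfold append.
  - destruct (Nat.ltb k n); [apply (polyfun_coord (VCol _ _)) | apply polyfun_const].
  - destruct (Nat.ltb k m); [apply (polyfun_coord (VFin _)) | apply polyfun_const].
Qed.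

Lemma act_trunc k A n m y : act k A (trunc n m y) = trunc n m (act k A y).
Proof.
  apply pt_eq; try reflexivity. simpl. extensionality c. extensionality i.
  unfold append. destruct (Nat.ltb c n); [reflexivity | apply actvec_zero].
Qed.

Definition colmap (n m d : nat) (y : pt) : pt :=
  Pt (xsym y) (xalt y)
     (append n (fun k i => Csum d (fun l => Cmul (xfin y (m + k * d + l)) (xcol y l i)))
        (fun _ _ => C0))
     (append m (xfin y) (fun _ => C0)).

Lemma colmap_polymap n m d : polymap (colmap n m d).
Proof.
  intros v. destruct v; cbn; try apply (polyfun_coord (VSym _ _ _));
    try apply (polyfun_coord (VAlt _ _ _)); unfold append.
  - destruct (Nat.ltb k n); [|apply polyfun_const].
    apply polyfun_Csum. intros l.
    apply polyfun_mul; [apply (polyfun_coord (VFin _)) | apply (polyfun_coord (VCol _ _))].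
  - destruct (Nat.ltb k m); [apply (polyfun_coord (VFin _)) | apply polyfun_const].
Qed.

Lemma colmap_equivariant n m d : equivariant (colmap n m d).
Proof.
  intros k A y _. apply pt_eq; try reflexivity. simpl. extensionality c. extensionality i.
  unfold append. destruct (Nat.ltb c n); [|symmetry; apply actvec_zero].
  rewrite actvec_Csum. apply Csum_ext. intros. symmetry. apply actvec_scal.
Qed.

Lemma colmap_into p q n m d y :
  inT p q d (m + n * d) y ->
  inT p q n m (colmap n m d y) /\ span_dim_le (fun k => (k < n)%nat) (xcol (colmap n m d y)) d.
Proof.
  intros (H1&H2&H3&H4&H5&H6). split.
  - unfold inT, colmap; simpl; repeat split; auto.
    + intros k i Hk. rewrite append_ge by lia. reflexivity.
    + intros k Hk. rewrite append_ge by lia. reflexivity.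
  - exists (xcol y). intros k Hk. exists (fun l => xfin y (m + k * d + l)). intros i.
    simpl. rewrite append_lt by lia. reflexivity.
Qed.

Lemma div_mod_unique_pair k l d : (l < d)%nat -> ((k * d + l) / d = k /\ (k * d + l) mod d = l)%nat.
Proof.
  intros H. assert (E : ((k * d + l) / d = k)%nat).
  { rewrite Nat.div_add_l by lia. rewrite Nat.div_small by lia. lia. }
  split; auto. pose proof (Nat.div_mod_eq (k * d + l) d). rewrite E in H0. lia.
Qed.

Lemma colmap_onto p q n m d x :
  inT p q n m x -> span_dim_le (fun k => (k < n)%nat) (xcol x) d ->
  image (colmap n m d) (inT p q d (m + n * d)) x.
Proof.
  intros (H1&H2&H3&H4&H5&H6) [U HU].
  destruct (choice (fun k c => (k < n)%nat ->
              forall i, xcol x k i = Csum d (fun l => Cmul (c l) (U l i)))) as [c Hc].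
  { intros k. destruct (Nat.ltb_spec k n) as [Hk|Hk].
    - destruct (HU k Hk) as [c Hc]. exists c. auto.
    - exists (fun _ => C0). intros; lia. }
  exists (Pt (xsym x) (xalt x) (append d U (fun _ _ => C0))
            (append m (xfin x) (fun s => if Nat.ltb s (n * d) then c (s / d)%nat (s mod d)%nat else C0))).
  split.
  - unfold inT; simpl; repeat split; auto.
    + intros k i Hk. rewrite append_ge by lia. reflexivity.
    + intros k Hk. rewrite append_ge by lia. destruct (Nat.ltb_spec (k - m) (n * d)); [lia | auto].
  - apply pt_eq; try reflexivity; simpl; extensionality k.
    + destruct (Nat.ltb_spec k n) as [Hk|Hk].
      * rewrite append_lt by auto. extensionality i. rewrite Hc by auto.
        apply Csum_ext. intros l Hl. rewrite !append_ge, append_lt by lia.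
        replace (m + k * d + l - m)%nat with (k * d + l)%nat by lia.
        destruct (Nat.ltb_spec (k * d + l) (n * d)); [|nia].
        destruct (div_mod_unique_pair k l d) as [-> ->]; auto.
      * rewrite append_ge by auto. extensionality i. symmetry. apply H5. auto.
    + destruct (Nat.ltb_spec k m); [rewrite !append_lt | rewrite append_ge, H6]; auto.
Qed.

Lemma col_span_noeth p q n m d :
  GNoetherian (inT p q d (m + n * d)) ->
  GNoetherian (fun x => inT p q n m x /\ span_dim_le (fun k => (k < n)%nat) (xcol x) d).
Proof.
  intros HN. apply (GNoetherian_ext (image (colmap n m d) (inT p q d (m + n * d)))).
  - intros x. split.
    + intros [y [Hy <-]]. apply colmap_into. auto.
    + intros [Hx Hs]. apply colmap_onto; auto.
  - apply GNoetherian_image; auto.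
    + intros k A HA y. apply inT_act.
    + apply colmap_polymap.
    + apply colmap_equivariant.
Qed.

Lemma Ycol_noeth p q n m :
  GNoetherian (inT p q n (m + S n * n)) -> GNoetherian (Ycol p q (S n) m).
Proof.
  intros HN. refine (GNoetherian_ext _ _ _ (col_span_noeth p q (S n) m n HN)).
  intros x. split.
  - intros [Hx Hs]. split; [auto|]. exists n. auto.
  - intros [Hx [r [Hr Hs]]]. split; [auto|]. apply (span_dim_le_mono _ _ r); [lia | auto].
Qed.

Lemma Ycol_0 p q m x : ~ Ycol p q 0 m x.
Proof. intros [_ [r [Hr _]]]. lia. Qed.

Definition mslot (b : bool) (x : pt) : nat -> nat -> nat -> C := if b then xalt x else xsym x.

Definition inTb (b : bool) (s t n m : nat) : pt -> Prop := if b then inT t s n m else inT s t n m.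

Definition Yslot (b : bool) (s t n m r : nat) (x : pt) : Prop :=
  inTb b s t n m x /\ tuple_rank_le s (mslot b x) r.

Definition with_slot (b : bool) (x : pt) (Ms : nat -> nat -> nat -> C) : pt :=
  if b then Pt (xsym x) Ms (xcol x) (xfin x) else Pt Ms (xalt x) (xcol x) (xfin x).

Lemma inTb_iff b s t n m x :
  inTb b s t n m x <->
  tuple_ok b s (mslot b x) /\ tuple_ok (negb b) t (mslot (negb b) x) /\
  (forall k i, (n <= k)%nat -> xcol x k i = C0) /\ (forall k, (m <= k)%nat -> xfin x k = C0).
Proof. destruct b; unfold inTb, inT, tuple_ok; simpl; tauto. Qed.

Lemma inTb_act b s t n m k A x : inTb b s t n m x -> inTb b s t n m (act k A x).
Proof. destruct b; apply inT_act. Qed.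

Lemma mslot_act b k A x : mslot b (act k A x) = fun c => actmat k A (mslot b x c).
Proof. destruct b; reflexivity. Qed.

Lemma mslot_trunc b n m x : mslot b (trunc n m x) = mslot b x.
Proof. destruct b; reflexivity. Qed.

Lemma mslot_with_slot b x Ms : mslot b (with_slot b x Ms) = Ms.
Proof. destruct b; reflexivity. Qed.

Lemma mslot_with_slot_other b x Ms : mslot (negb b) (with_slot b x Ms) = mslot (negb b) x.
Proof. destruct b; reflexivity. Qed.

Lemma xcol_with_slot b x Ms : xcol (with_slot b x Ms) = xcol x.
Proof. destruct b; reflexivity. Qed.

Lemma xfin_with_slot b x Ms : xfin (with_slot b x Ms) = xfin x.
Proof. destruct b; reflexivity. Qed.

Lemma act_with_slot k A b x Ms :
  act k A (with_slot b x Ms) = with_slot b (act k A x) (fun c => actmat k A (Ms c)).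
Proof. destruct b; reflexivity. Qed.

Lemma with_slot_eq b x y Ms :
  mslot (negb b) x = mslot (negb b) y -> xcol x = xcol y -> xfin x = xfin y ->
  Ms = mslot b y -> with_slot b x Ms = y.
Proof. destruct b, x, y; simpl; intros; subst; reflexivity. Qed.

Lemma polyfun_mslot b k i j : polyfun (fun y => mslot b y k i j).
Proof. destruct b; [exact (polyfun_coord (VAlt k i j)) | exact (polyfun_coord (VSym k i j))]. Qed.

Lemma polymap_with_slot b g (Ms : pt -> nat -> nat -> nat -> C) :
  polymap g -> (forall k i j, polyfun (fun y => Ms y k i j)) ->
  polymap (fun y => with_slot b (g y) (Ms y)).
Proof.
  intros Hg HM v. destruct b, v; cbn;
    first [ apply HM | apply (Hg (VSym _ _ _)) | apply (Hg (VAlt _ _ _))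
          | apply (Hg (VCol _ _)) | apply (Hg (VFin _)) ].
Qed.

Definition transp (a b k : nat) : nat :=
  if Nat.eqb k a then b else if Nat.eqb k b then a else k.

Lemma transp_invol a b k : transp a b (transp a b k) = k.
Proof.
  unfold transp. destruct (Nat.eqb_spec k a), (Nat.eqb_spec k b); subst; rewrite ?Nat.eqb_refl;
    repeat match goal with |- context [Nat.eqb ?x ?y] => destruct (Nat.eqb_spec x y) end; lia.
Qed.

Lemma transp_lt k0 P k :
  (k0 < S P)%nat -> (k < S P)%nat -> k <> k0 -> (transp k0 P k < P)%nat.
Proof. intros; unfold transp; destruct (Nat.eqb_spec k k0), (Nat.eqb_spec k P); lia. Qed.

Lemma transp_lt_succ k0 P k : (k0 < S P)%nat -> (k < P)%nat -> (transp k0 P k < S P)%nat.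
Proof. intros; unfold transp; destruct (Nat.eqb_spec k k0), (Nat.eqb_spec k P); lia. Qed.

Lemma transp_ge k0 P k : (k0 < S P)%nat -> (S P <= k)%nat -> transp k0 P k = k.
Proof. intros; unfold transp; destruct (Nat.eqb_spec k k0), (Nat.eqb_spec k P); lia. Qed.

(* [remove_at k0 P] deletes entry [k0] of a tuple of length [P + 1] by moving its
   last entry into position [k0]; [reinsert k0 P F] undoes this, with [F] at [k0]. *)
Definition remove_at (k0 P : nat) (Ms : nat -> nat -> nat -> C) : nat -> nat -> nat -> C :=
  fun k => if Nat.ltb k P then Ms (transp k0 P k) else zero_mx.

Definition reinsert (k0 P : nat) (F : nat -> nat -> C) (Ns : nat -> nat -> nat -> C)
  : nat -> nat -> nat -> C :=
  fun k => if Nat.eqb k k0 then F else Ns (transp k0 P k).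

Lemma reinsert_at k0 P F Ns : reinsert k0 P F Ns k0 = F.
Proof. unfold reinsert. rewrite Nat.eqb_refl. reflexivity. Qed.

Lemma reinsert_ne k0 P F Ns k : k <> k0 -> reinsert k0 P F Ns k = Ns (transp k0 P k).
Proof. intros H. unfold reinsert. destruct (Nat.eqb_spec k k0); [lia | reflexivity]. Qed.

Lemma reinsert_remove_at k0 P Ms :
  (k0 < S P)%nat -> (forall k i j, (S P <= k)%nat -> Ms k i j = C0) ->
  reinsert k0 P (Ms k0) (remove_at k0 P Ms) = Ms.
Proof.
  intros Hk0 HMs. extensionality k. destruct (Nat.eq_dec k k0) as [->|Hk].
  { apply reinsert_at. }
  rewrite reinsert_ne by auto. unfold remove_at. rewrite transp_invol.
  destruct (Nat.lt_ge_cases k (S P)) as [HkP|HkP].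
  - pose proof (transp_lt k0 P k Hk0 HkP Hk). destruct (Nat.ltb_spec (transp k0 P k) P); [auto | lia].
  - rewrite transp_ge by auto. destruct (Nat.ltb_spec k P); [lia|].
    extensionality i. extensionality j. symmetry. apply HMs. auto.
Qed.

Lemma tuple_ok_remove_at b k0 P Ms :
  (k0 < S P)%nat -> tuple_ok b (S P) Ms -> tuple_ok b P (remove_at k0 P Ms).
Proof.
  intros Hk0 [Hsym Hzero]. unfold remove_at. split; intros k i j Hk.
  - destruct (Nat.ltb_spec k P); [|lia]. apply Hsym, transp_lt_succ; auto.
  - destruct (Nat.ltb_spec k P); [lia | reflexivity].
Qed.

Lemma tuple_ok_reinsert b k0 P F Ns :
  (k0 < S P)%nat -> msymmetric b F -> tuple_ok b P Ns -> tuple_ok b (S P) (reinsert k0 P F Ns).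
Proof.
  intros Hk0 HF [Hsym Hzero]. split; intros k i j Hk; destruct (Nat.eq_dec k k0) as [->|Hne].
  - rewrite !reinsert_at. apply HF.
  - rewrite !reinsert_ne by auto. apply Hsym, transp_lt; auto.
  - lia.
  - rewrite reinsert_ne, transp_ge by auto. apply Hzero. lia.
Qed.

Lemma lincomb_reinsert s lam k0 P F Ns i j :
  (k0 < s)%nat ->
  lincomb s lam (reinsert k0 P F Ns) i j =
  Cadd (Cmul (lam k0) (F i j)) (lincomb s lam (reinsert k0 P zero_mx Ns) i j).
Proof.
  intros Hk0. unfold lincomb.
  rewrite (Csum_split s k0 (fun k => Cmul (lam k) (reinsert k0 P F Ns k i j)) Hk0),
    (Csum_split s k0 (fun k => Cmul (lam k) (reinsert k0 P zero_mx Ns k i j)) Hk0).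
  rewrite !reinsert_at. change (zero_mx i j) with C0.
  rewrite (Csum_ext s (fun k => if Nat.eqb k k0 then C0 else Cmul (lam k) (reinsert k0 P F Ns k i j))
             (fun k => if Nat.eqb k k0 then C0 else Cmul (lam k) (reinsert k0 P zero_mx Ns k i j))).
  - ring.
  - intros l _. destruct (Nat.eqb_spec l k0); [reflexivity|]. rewrite !reinsert_ne by auto. reflexivity.
Qed.

Lemma msymmetric_zero b : msymmetric b zero_mx.
Proof. intros i j. unfold zero_mx, msym. destruct b; ring. Qed.

Lemma outer_append r U W V W' i j :
  outer r (append r U W) (append r V W') i j = outer r U V i j.
Proof. apply Csum_ext. intros l Hl. rewrite !append_lt by auto. reflexivity. Qed.

Lemma outer_scale_r r U c V i j :
  outer r U (fun l j => Cmul c (V l j)) i j = Cmul c (outer r U V i j).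
Proof. unfold outer. rewrite <- Csum_scal. apply Csum_ext. intros. ring. Qed.

Lemma lincomb_append s lam w Ms i j : lincomb s (append s lam w) Ms i j = lincomb s lam Ms i j.
Proof. apply Csum_ext. intros k Hk. rewrite append_lt by auto. reflexivity. Qed.

Lemma lincomb_scale s c lam Ms i j :
  lincomb s (fun k => Cmul c (lam k)) Ms i j = Cmul c (lincomb s lam Ms i j).
Proof. unfold lincomb. rewrite <- Csum_scal. apply Csum_ext. intros. ring. Qed.

Lemma lincomb_remove_at P k0 lam Ms i j :
  (k0 < S P)%nat -> (forall k i j, (S P <= k)%nat -> Ms k i j = C0) ->
  lincomb (S P) lam Ms i j =
  Cadd (Cmul (lam k0) (Ms k0 i j)) (lincomb (S P) lam (reinsert k0 P zero_mx (remove_at k0 P Ms)) i j).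
Proof.
  intros Hk0 HMs. rewrite <- (lincomb_reinsert (S P) lam k0 P (Ms k0)) by auto.
  rewrite reinsert_remove_at by auto. reflexivity.
Qed.

(* On [slot_domain], columns [n, n + r) and [n + r, n + 2 r) of [y] hold the
   factors U, V and the scalars [m, m + P] hold lambda with [lambda k0 = 1], so
   the [k0]-th matrix is solved from [sum_k lambda_k M_k = U V^T]. *)
Definition slot_matrix (b : bool) (P n m r k0 : nat) (y : pt) : nat -> nat -> nat -> C :=
  reinsert k0 P
    (Msub (outer r (shift n (xcol y)) (shift r (shift n (xcol y))))
          (lincomb (S P) (shift m (xfin y)) (reinsert k0 P zero_mx (mslot b y))))
    (mslot b y).

Definition slot_map (b : bool) (P n m r k0 : nat) (y : pt) : pt :=
  with_slot b (trunc n m y) (slot_matrix b P n m r k0 y).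

Definition slot_domain (b : bool) (P t n m r k0 : nat) (y : pt) : Prop :=
  inTb b P t (n + 2 * r) (m + S P) y /\
  (msymmetric b (outer r (shift n (xcol y)) (shift r (shift n (xcol y)))) /\
   xfin y (m + k0) = C1).

Lemma polyfun_outer_xcol n r i j :
  polyfun (fun y => outer r (shift n (xcol y)) (shift r (shift n (xcol y))) i j).
Proof.
  unfold outer, shift. apply polyfun_Csum. intros l.
  apply polyfun_mul; apply (polyfun_coord (VCol _ _)).
Qed.

Lemma outer_xcol_act n r k A y i j :
  outer r (shift n (xcol (act k A y))) (shift r (shift n (xcol (act k A y)))) i j =
  actmat k A (outer r (shift n (xcol y)) (shift r (shift n (xcol y)))) i j.
Proof. rewrite actmat_outer. reflexivity. Qed.

Lemma slot_domain_noeth b P t n m r k0 :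
  GNoetherian (inTb b P t (n + 2 * r) (m + S P)) -> GNoetherian (slot_domain b P t n m r k0).
Proof.
  intros HN. apply (GNoetherian_zclosed (inTb b P t (n + 2 * r) (m + S P))); [|exact HN].
  apply zclosed_and.
  - unfold msymmetric. apply zclosed_forall. intros i. apply zclosed_forall. intros j.
    apply zclosed_eq; [apply polyfun_outer_xcol|].
    unfold msym. destruct b; [apply polyfun_opp|]; apply polyfun_outer_xcol.
  - apply zclosed_eq; [apply (polyfun_coord (VFin _)) | apply polyfun_const].
Qed.

Lemma slot_domain_Gstable b P t n m r k0 : Gstable (slot_domain b P t n m r k0).
Proof.
  intros k A HA y [Hy [Hs H1]]. split; [apply inTb_act; auto | split; [|exact H1]].
  intros i j. rewrite !outer_xcol_act. apply msymmetric_actmat. auto.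
Qed.

Lemma slot_map_polymap b P n m r k0 : polymap (slot_map b P n m r k0).
Proof.
  apply polymap_with_slot; [apply polymap_trunc|]. intros k i j.
  unfold slot_matrix, reinsert. destruct (Nat.eqb k k0); [|apply polyfun_mslot].
  unfold Msub, Csub. apply polyfun_add; [apply polyfun_outer_xcol|].
  apply polyfun_opp. unfold lincomb. apply polyfun_Csum. intros l.
  apply polyfun_mul; [apply (polyfun_coord (VFin _))|].
  destruct (Nat.eqb l k0); [apply polyfun_const | apply polyfun_mslot].
Qed.

Lemma slot_matrix_act b P n m r k0 k A y c i j :
  slot_matrix b P n m r k0 (act k A y) c i j = actmat k A (slot_matrix b P n m r k0 y c) i j.
Proof.
  unfold slot_matrix. rewrite mslot_act. destruct (Nat.eq_dec c k0) as [->|Hc].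
  2:{ rewrite !reinsert_ne by auto. reflexivity. }
  rewrite !reinsert_at, actmat_Msub. unfold Msub.
  rewrite actmat_lincomb, <- outer_xcol_act. f_equal.
  apply Csum_ext. intros l _. f_equal. unfold reinsert. destruct (Nat.eqb l k0); [|reflexivity].
  symmetry. exact (actmat_zero k A i j).
Qed.

Lemma slot_map_equivariant b P n m r k0 : equivariant (slot_map b P n m r k0).
Proof.
  intros k A y _. unfold slot_map. rewrite act_with_slot, act_trunc. f_equal.
  extensionality c. extensionality i. extensionality j. apply slot_matrix_act.
Qed.

Lemma lincomb_slot_matrix b P n m r k0 y i j :
  (k0 < S P)%nat -> xfin y (m + k0) = C1 ->
  lincomb (S P) (shift m (xfin y)) (slot_matrix b P n m r k0 y) i j =
  outer r (shift n (xcol y)) (shift r (shift n (xcol y))) i j.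
Proof.
  intros Hk0 H1. unfold slot_matrix. rewrite lincomb_reinsert by auto.
  change (shift m (xfin y) k0) with (xfin y (m + k0)). rewrite H1. unfold Msub, Csub. ring.
Qed.

Lemma slot_map_into b P t n m r k0 y :
  (k0 < S P)%nat -> slot_domain b P t n m r k0 y -> Yslot b (S P) t n m r (slot_map b P n m r k0 y).
Proof.
  intros Hk0 [Hy [Hs H1]]. apply inTb_iff in Hy as (Hslot & Hother & Hcol & Hfin).
  unfold slot_map. split.
  - apply inTb_iff.
    rewrite mslot_with_slot, mslot_with_slot_other, xcol_with_slot, xfin_with_slot, mslot_trunc.
    split; [|split; [exact Hother | split]].
    + apply tuple_ok_reinsert; auto. apply msymmetric_Msub; auto.
      apply msymmetric_lincomb, tuple_ok_reinsert; auto. apply msymmetric_zero.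
    + intros k i Hk. unfold trunc. simpl. rewrite append_ge by auto. reflexivity.
    + intros k Hk. unfold trunc. simpl. rewrite append_ge by auto. reflexivity.
  - rewrite mslot_with_slot. apply tuple_rank_le_outer.
    exists (shift m (xfin y)), k0, (shift n (xcol y)), (shift r (shift n (xcol y))).
    split; [auto | split].
    + change (shift m (xfin y) k0) with (xfin y (m + k0)). rewrite H1. apply C1_neq_C0.
    + intros i j. apply lincomb_slot_matrix; auto.
Qed.

Section SlotPreimage.

Variables (b : bool) (P t n m r k0 : nat) (x : pt) (lam : nat -> C) (U V : nat -> nat -> C).
Hypotheses (Hx : inTb b (S P) t n m x) (Hk0 : (k0 < S P)%nat) (Hlam : lam k0 <> C0)
  (HUV : forall i j, lincomb (S P) lam (mslot b x) i j = outer r U V i j).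

(* [lam] and [V] are rescaled by [1 / lam k0] to meet the normalization of
   [slot_domain]. *)
Definition slot_preimage : pt :=
  with_slot b
    (Pt (xsym x) (xalt x)
        (append n (xcol x) (append r U (append r (fun l j => Cmul (Cinv (lam k0)) (V l j))
                                                 (fun _ _ => C0))))
        (append m (xfin x) (append (S P) (fun k => Cmul (Cinv (lam k0)) (lam k)) (fun _ => C0))))
    (remove_at k0 P (mslot b x)).

Lemma outer_slot_preimage i j :
  outer r (shift n (xcol slot_preimage)) (shift r (shift n (xcol slot_preimage))) i j =
  Cmul (Cinv (lam k0)) (lincomb (S P) lam (mslot b x) i j).
Proof.
  unfold slot_preimage. rewrite xcol_with_slot. simpl.
  rewrite !shift_append, outer_append, outer_scale_r, HUV. reflexivity.
Qed.

Lemma slot_preimage_domain : slot_domain b P t n m r k0 slot_preimage.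
Proof.
  apply inTb_iff in Hx as (Hslot & Hother & Hcol & Hfin). split; [|split].
  - apply inTb_iff. unfold slot_preimage.
    rewrite mslot_with_slot, mslot_with_slot_other, xcol_with_slot, xfin_with_slot.
    split; [apply tuple_ok_remove_at; auto | split; [destruct b; exact Hother | split]].
    + intros k i Hk. simpl. rewrite !append_ge by lia. reflexivity.
    + intros k Hk. simpl. rewrite !append_ge by lia. reflexivity.
  - intros i j. rewrite !outer_slot_preimage, (msymmetric_lincomb _ _ lam _ Hslot i j).
    unfold msym. destruct b; ring.
  - unfold slot_preimage. rewrite xfin_with_slot. simpl.
    rewrite append_ge, append_lt by lia. replace (m + k0 - m)%nat with k0 by lia.
    apply Cinv_l. auto.
Qed.

Lemma slot_map_preimage : slot_map b P n m r k0 slot_preimage = x.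
Proof.
  pose proof Hx as Hx'. apply inTb_iff in Hx' as ([Hsym Hzero] & Hother & Hcol & Hfin).
  unfold slot_map. apply with_slot_eq.
  - rewrite mslot_trunc. unfold slot_preimage. rewrite mslot_with_slot_other. destruct b; reflexivity.
  - unfold trunc, slot_preimage. simpl. rewrite xcol_with_slot. simpl. extensionality k.
    destruct (Nat.ltb_spec k n); [rewrite !append_lt by auto; reflexivity|].
    rewrite append_ge by auto. extensionality i. symmetry. auto.
  - unfold trunc, slot_preimage. simpl. rewrite xfin_with_slot. simpl. extensionality k.
    destruct (Nat.ltb_spec k m); [rewrite !append_lt by auto; reflexivity|].
    rewrite append_ge by auto. symmetry. auto.
  - unfold slot_matrix.
    replace (mslot b slot_preimage) with (remove_at k0 P (mslot b x))
      by (symmetry; apply mslot_with_slot).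
    rewrite <- (reinsert_remove_at k0 P (mslot b x)) at 3 by auto. f_equal.
    extensionality i. extensionality j. unfold Msub, Csub.
    rewrite outer_slot_preimage, (lincomb_remove_at P k0 lam (mslot b x)) by auto.
    unfold slot_preimage. rewrite xfin_with_slot. simpl.
    rewrite shift_append, lincomb_append, lincomb_scale.
    transitivity (Cmul (Cmul (Cinv (lam k0)) (lam k0)) (mslot b x k0 i j)); [ring|].
    rewrite Cinv_l by auto. ring.
Qed.

End SlotPreimage.

Lemma slot_map_onto b P t n m r x :
  Yslot b (S P) t n m r x ->
  exists k0, (k0 < S P)%nat /\ image (slot_map b P n m r k0) (slot_domain b P t n m r k0) x.
Proof.
  intros [Hx Hrk]. apply tuple_rank_le_outer in Hrk as [lam [k0 [U [V [Hk0 [Hl HUV]]]]]].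
  exists k0. split; [auto|]. exists (slot_preimage b P n m r k0 x lam U V).
  split; [apply slot_preimage_domain | apply (slot_map_preimage _ _ t)]; auto.
Qed.

Theorem Yslot_noeth b P t n m r :
  GNoetherian (inTb b P t (n + 2 * r) (m + S P)) -> GNoetherian (Yslot b (S P) t n m r).
Proof.
  intros HN.
  apply (GNoetherian_ext (fun x => exists k0, (k0 < S P)%nat /\
           image (slot_map b P n m r k0) (slot_domain b P t n m r k0) x)).
  - intros x. split; [|apply slot_map_onto].
    intros [k0 [Hk0 [y [Hy <-]]]]. apply slot_map_into; auto.
  - apply GNoetherian_bigunion. intros k0 Hk0. split.
    + apply Gstable_image; [apply slot_map_equivariant | apply slot_domain_Gstable].
    + apply GNoetherian_image.
      * apply slot_domain_Gstable.
      * apply slot_map_polymap.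
      * apply slot_map_equivariant.
      * apply slot_domain_noeth. auto.
Qed.

Theorem lemma3p2 (p q n m : nat)
  (Hind : forall p' q' n' m' : nat,
      lex_lt (p', q', n') (p, q, n) -> GNoetherian (inT p' q' n' m')) :
  forall r : nat,
    GNoetherian (Ysym p q n m r) /\
    GNoetherian (Yalt p q n m r) /\
    GNoetherian (Ycol p q n m).
Proof.
  intros r. split; [|split].
  - destruct p as [|P].
    + apply GNoetherian_empty. intros x [_ H]. exact (tuple_rank_le_0 _ _ H).
    + apply (Yslot_noeth false). apply Hind. simpl. lia.
  - destruct q as [|Q].
    + apply GNoetherian_empty. intros x [_ H]. exact (tuple_rank_le_0 _ _ H).
    + apply (Yslot_noeth true). apply Hind. simpl. lia.
  - destruct n as [|n].
    + apply GNoetherian_empty. apply Ycol_0.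
    + apply Ycol_noeth. apply Hind. simpl. lia.
Qed.
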